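(* Let $V$ be a nonlocal vertex algebra and let $\mathcal S(x)$ be a unitary rational quantum Yang–Baxter operator on $V$. Then: (a) $\mathcal S(x)(\mathbf 1\otimes v)=\mathbf 1\otimes v$ for all $v\in V$ if and only if $\mathcal S(x)(v\otimes\mathbf 1)=v\otimes\mathbf 1$ for all $v\in V$; (b) $[\mathcal D\otimes1,\mathcal S(x)]=-\frac{d}{dx}\mathcal S(x)$ if and only if $[1\otimes\mathcal D,\mathcal S^{-1}(x)]=\frac{d}{dx}\mathcal S^{-1}(x)$; (c) $\mathcal S(x_1)(Y(x_2)\otimes1)=(Y(x_2)\otimes1)\mathcal S^{23}(x_1)\mathcal S^{13}(x_1+x_2)$ if and only if $\mathcal S(x_1)(1\otimes Y(x_2))=(1\otimes Y(x_2))\mathcal S^{12}(x_1-x_2)\mathcal S^{13}(x_1)$.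
   Context: All vector spaces are over $\mathbb{C}$. A nonlocal vertex algebra is a vector space $V$ with a linear map $Y(\cdot,x):V\to \mathrm{Hom}(V,V((x)))$, $v\mapsto Y(v,x)=\sum_{n\in\mathbb Z}v_nx^{-n-1}$, and a vector $\mathbf 1\in V$ such that for all $v$: $Y(\mathbf 1,x)v=v$, $Y(v,x)\mathbf 1\in V[[x]]$, $\lim_{x\to0}Y(v,x)\mathbf 1=v$; and for all $u,v,w$ there is $k\ge0$ with $(x_0+x_2)^kY(u,x_0+x_2)Y(v,x_2)w=(x_0+x_2)^kY(Y(u,x_0)v,x_2)w$. Write $Y(x):V\otimes V\to V((x))$, $Y(x)(u\otimes v)=Y(u,x)v$, and $\mathcal Dv=v_{-2}\mathbf 1$. Conventions: $f(x_1\pm x_2)$ for $f\in\mathbb C((x))$ is expanded in nonnegative powers of the second variable; for a linear map $T$ on a tensor product, $T^{ij}$ denotes $T$ acting on the $i$-th and $j$-th tensor factors (identity elsewhere); maps are extended linearly over scalar formal series. A rational quantum Yang–Baxter operator on $V$ is a linear map $\mathcal S(x):V\otimes V\to V\otimes V\otimes\mathbb C((x))$ with $\mathcal S^{12}(x)\mathcal S^{13}(x+z)\mathcal S^{23}(z)=\mathcal S^{23}(z)\mathcal S^{13}(x+z)\mathcal S^{12}(x)$; it is unitary if $\mathcal S(x)\mathcal S^{21}(-x)=1$, where $\mathcal S^{21}(x)=\sigma\mathcal S(x)\sigma$ with $\sigma$ the flip on $V\otimes V$. Then $\mathcal S^{-1}(x)=\mathcal S^{21}(-x)$ denotes the inverse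 of the $\mathbb C((x))$-linear extension of $\mathcal S(x)$. *)

From mathcomp Require Import all_boot all_algebra.
From mathcomp Require Import classical_sets cardinality fsbigop.
From mathcomp Require Import Rstruct complex.
Set Implicit Arguments. Unset Strict Implicit. Unset Printing Implicit Defensive.
Import GRing.Theory Num.Theory.
Local Open Scope ring_scope.

Definition C : fieldType := complex Rdefinitions.R.

(* Sum of a (finitely supported) family of scalars; all sums below are over
   families that are finitely supported when the data are as in the paper. *)
Definition fsum {T : choiceType} (f : T -> C) : C := \sum_(t \in [set: T]) f t.

Definition fin_supp {T : Type} (f : T -> C) : Prop :=
  finite_set [set t | f t != 0].

Definition ibin (a : int) (k : nat) : C :=
  (\prod_(i < k) (a - (i : nat)%:Z)%:~R) / (k`!)%:R.

(* V is the vector space with basis I: a vector is a finitely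
   supported function I -> C.  V(x)V has basis I*I, V(x)V(x)V has basis
   (I*I)*I.  An element of V(x)V(x)C((x)) = (+)_{I*I} C((x)) is a
   finitely supported function I*I -> (int -> C), the int giving the
   exponent of x.  Elements of V(x)V(x)V(x)C((x))((z)) are functions
   (I*I)*I -> int -> int -> C (first int: exponent of x, second: of z).  *)

Section Defs.
Context (I : choiceType).
Local Notation I2 := (I * I)%type.
Local Notation I3 := ((I * I) * I)%type.

Definition basis (j : I) : I -> C := fun i => if i == j then 1 else 0.

Definition ten (u v : I -> C) : I2 -> C := fun p => u p.1 * v p.2.

(* ---------- vertex operator ----------
   y a b n = coefficient of x^n in Y(e_a, x) e_b  (a vector of V).
   Yv u v n = coefficient of x^n in Y(u,x) v (bilinear extension). *)
Definition Yv (y : I -> I -> int -> I -> C) (u v : I -> C) (n : int) : I -> C :=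
  fun i => fsum (fun a => fsum (fun b => u a * v b * y a b n i)).

(* coefficient of x0^p x2^q in Y(u,x0+x2) Y(v,x2) w,
   (x0+x2)^m expanded in nonnegative powers of x2 *)
Definition YY_l y (u v w : I -> C) (p q : int) : I -> C :=
  fun i => fsum (fun n : int =>
    if n <= q then ibin (p + q - n) `|q - n|%N * Yv y u (Yv y v w n) (p + q - n) i
    else 0).

(* coefficient of x0^p x2^q in Y(Y(u,x0)v, x2) w *)
Definition YY_r y (u v w : I -> C) (p q : int) : I -> C :=
  Yv y (Yv y u v p) w q.

(* multiplication of a series in x0, x2 by (x0+x2)^k *)
Definition mulpow (k : nat) (F : int -> int -> I -> C) (p q : int) : I -> C :=
  fun i => \sum_(j < k.+1) ('C(k, j))%:R * F (p - (k - j)%N%:Z) (q - (j : nat)%:Z) i.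

Definition nonlocal_va (y : I -> I -> int -> I -> C) (vac : I -> C) : Prop :=
  (* Y(e_a,x)e_b in V((x)) *)
  (forall a b n, fin_supp (y a b n)) /\
  (forall a b, exists N : int, forall n, n < N -> forall i, y a b n i = 0) /\
  fin_supp vac /\
  (forall v, fin_supp v -> forall n i, Yv y vac v n i = if n == 0 then v i else 0) /\
  (forall v, fin_supp v -> forall n, n < 0 -> forall i, Yv y v vac n i = 0) /\
  (forall v, fin_supp v -> forall i, Yv y v vac 0 i = v i) /\
  (forall u v w, fin_supp u -> fin_supp v -> fin_supp w ->
     exists k : nat, forall p q i,
       mulpow k (YY_l y u v w) p q i = mulpow k (YY_r y u v w) p q i).

(* D v = v_{-2} 1 = coefficient of x^1 in Y(v,x)1 ; Dm = matrix of D *)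
Definition Dv y (vac v : I -> C) : I -> C := Yv y v vac 1.
Definition Dm y (vac : I -> C) (i a : I) : C := Dv y vac (basis a) i.

(* ---------- operators on V(x)V(x)C((x)) ----------
   An operator S(x) : V(x)V -> V(x)V(x)C((x)) is given by sc p q n =
   coefficient of e_p x^n in S(x)(e_q). *)
Definition cst (w : I2 -> C) : I2 -> int -> C := fun p n => if n == 0 then w p else 0.

(* C((x))-linear extension applied to an element of V(x)V(x)C((x)) *)
Definition lapp (M : I2 -> I2 -> int -> C) (u : I2 -> int -> C) : I2 -> int -> C :=
  fun p n => fsum (fun q => fsum (fun m => M p q m * u q (n - m))).

Definition flip (p : I2) : I2 := (p.2, p.1).
Definition S21 (sc : I2 -> I2 -> int -> C) : I2 -> I2 -> int -> C :=
  fun p q n => sc (flip p) (flip q) n.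
(* S^{-1}(x) := S^{21}(-x) *)
Definition Sinv (sc : I2 -> I2 -> int -> C) : I2 -> I2 -> int -> C :=
  fun p q n => (-1) ^ n * S21 sc p q n.
Definition lder (M : I2 -> I2 -> int -> C) : I2 -> I2 -> int -> C :=
  fun p q n => (n + 1)%:~R * M p q (n + 1).
Definition DL (Dmat : I -> I -> C) (u : I2 -> int -> C) : I2 -> int -> C :=
  fun p n => fsum (fun a => Dmat p.1 a * u (a, p.2) n).
Definition DR (Dmat : I -> I -> C) (u : I2 -> int -> C) : I2 -> int -> C :=
  fun p n => fsum (fun b => Dmat p.2 b * u (p.1, b) n).

Definition dcst (w : I3 -> C) : I3 -> int -> int -> C :=
  fun p m n => if (m == 0) && (n == 0) then w p else 0.
Definition dapp (M : I3 -> I3 -> int -> int -> C) (u : I3 -> int -> int -> C)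
  : I3 -> int -> int -> C :=
  fun p m n => fsum (fun r => fsum (fun n1 : int => fsum (fun m1 : int =>
      M p r m1 n1 * u r (m - m1) (n - n1)))).

Definition S12_x sc : I3 -> I3 -> int -> int -> C := fun p q m n =>
  if (n == 0) && (p.2 == q.2) then sc (p.1.1, p.1.2) (q.1.1, q.1.2) m else 0.
Definition S13_x sc : I3 -> I3 -> int -> int -> C := fun p q m n =>
  if (n == 0) && (p.1.2 == q.1.2) then sc (p.1.1, p.2) (q.1.1, q.2) m else 0.
Definition S23_x sc : I3 -> I3 -> int -> int -> C := fun p q m n =>
  if (n == 0) && (p.1.1 == q.1.1) then sc (p.1.2, p.2) (q.1.2, q.2) m else 0.
Definition S23_z sc : I3 -> I3 -> int -> int -> C := fun p q m n =>
  if (m == 0) && (p.1.1 == q.1.1) then sc (p.1.2, p.2) (q.1.2, q.2) n else 0.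
(* S^{13}(x+z), expanded in nonnegative powers of z *)
Definition S13_xpz sc : I3 -> I3 -> int -> int -> C := fun p q m n =>
  if (0 <= n) && (p.1.2 == q.1.2)
  then ibin (m + n) `|n|%N * sc (p.1.1, p.2) (q.1.1, q.2) (m + n) else 0.
(* S^{12}(x-z), expanded in nonnegative powers of z *)
Definition S12_xmz sc : I3 -> I3 -> int -> int -> C := fun p q m n =>
  if (0 <= n) && (p.2 == q.2)
  then (-1) ^ n * ibin (m + n) `|n|%N * sc (p.1.1, p.1.2) (q.1.1, q.1.2) (m + n)
  else 0.

Definition rqyb_operator (sc : I2 -> I2 -> int -> C) : Prop :=
  (* S(x)(e_q) in V(x)V(x)C((x)) *)
  (forall q, finite_set [set p | exists n, sc p q n != 0]) /\
  (forall p q, exists N : int, forall n, n < N -> sc p q n = 0) /\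
  (forall w : I3 -> C, fin_supp w ->
     dapp (S12_x sc) (dapp (S13_xpz sc) (dapp (S23_z sc) (dcst w)))
     = dapp (S23_z sc) (dapp (S13_xpz sc) (dapp (S12_x sc) (dcst w)))).

Definition unitary (sc : I2 -> I2 -> int -> C) : Prop :=
  forall w : I2 -> C, fin_supp w -> lapp sc (lapp (Sinv sc) (cst w)) = cst w.

(* (Y(x2)(x)1) w, w in V(x)V(x)V : coefficient of x2^n *)
Definition Y1 y (w : I3 -> C) : I2 -> int -> C :=
  fun p n => fsum (fun ab : I2 => w (ab, p.2) * y ab.1 ab.2 n p.1).
Definition Y2 y (w : I3 -> C) : I2 -> int -> C :=
  fun p n => fsum (fun bc : I2 => w ((p.1, bc.1), bc.2) * y bc.1 bc.2 n p.2).
(* S(x1) applied to an element of (V(x)V)((x2)) : coefficient of x1^m x2^n *)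
Definition Sser (sc : I2 -> I2 -> int -> C) (u : I2 -> int -> C)
  : I2 -> int -> int -> C :=
  fun p m n => fsum (fun q => sc p q m * u q n).
Definition Y1d y (u : I3 -> int -> int -> C) : I2 -> int -> int -> C :=
  fun p m n => fsum (fun ab : I2 => fsum (fun k : int =>
      y ab.1 ab.2 k p.1 * u (ab, p.2) m (n - k))).
Definition Y2d y (u : I3 -> int -> int -> C) : I2 -> int -> int -> C :=
  fun p m n => fsum (fun bc : I2 => fsum (fun k : int =>
      y bc.1 bc.2 k p.2 * u ((p.1, bc.1), bc.2) m (n - k))).

End Defs.

(* All three equivalences are formal consequences of unitarity,
   S^-1(x) = S^21(-x).  For (a) and (b), conjugation by u(x) |-> sigma u(-x)
   exchanges S(x) with S^-1(x), 1 (x) v with v (x) 1, D (x) 1 with 1 (x) D and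
   d/dx with -d/dx.  For (c), moving the first tensor factor to the last place
   and replacing x1 by -x1 turns the right-hand identity into
   S^-1(x1) (Y(x2) (x) 1) = (Y(x2) (x) 1) (S^-1)^13(x1+x2) (S^-1)^23(x1),
   and S Y = Y A B is equivalent to S^-1 Y = Y B^-1 A^-1; here
   S^13(x1+x2)^-1 = (S^-1)^13(x1+x2) because expanding f(x1+x2) in
   nonnegative powers of x2 is multiplicative (Vandermonde's identity). *)

From Pilot Require Import Defs.
From mathcomp Require Import all_boot all_algebra.
From mathcomp Require Import classical_sets cardinality fsbigop.
From mathcomp Require Import Rstruct complex boolp.
From mathcomp Require Import order finmap ring zify.
Import Order.TTheory GRing.Theory Num.Theory.
Local Open Scope ring_scope.
Local Open Scope classical_set_scope.

Lemma eq_fsum {T : choiceType} (f g : T -> C) : f =1 g -> fsum f = fsum g.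
Proof. by move=> e; congr fsum; apply: funext. Qed.

Lemma fsum_eq0 {T : choiceType} (f : T -> C) : (forall t, f t = 0) -> fsum f = 0.
Proof. by move=> h; rewrite /fsum fsbig1 // => t _; rewrite h. Qed.

Lemma fsumMl {T : choiceType} (c : C) (f : T -> C) :
  fsum (fun t => c * f t) = c * fsum f.
Proof. by rewrite /fsum mulr_fsumr. Qed.

Lemma fsumMr {T : choiceType} (c : C) (f : T -> C) :
  fsum (fun t => f t * c) = fsum f * c.
Proof. by rewrite /fsum mulr_fsuml. Qed.

Lemma fsumN {T : choiceType} (f : T -> C) : fsum (fun t => - f t) = - fsum f.
Proof. by rewrite -mulN1r -fsumMl; apply: eq_fsum => t; rewrite mulN1r. Qed.

Lemma reindex_fsum {T U : choiceType} (h : T -> U) (f : U -> C) :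
  bijective h -> fsum f = fsum (fun t => f (h t)).
Proof. by move=> hb; rewrite /fsum (reindex_fsbigT h). Qed.

Lemma fsum_single {T : choiceType} (f : T -> C) (t0 : T) :
  (forall t, t != t0 -> f t = 0) -> fsum f = f t0.
Proof.
move=> h; rewrite /fsum (fsbigTE [fset t0]%fset) ?big_seq_fset1 //.
by move=> t; rewrite inE => /h.
Qed.

Lemma fsum_neq0 {T : choiceType} (f : T -> C) : fsum f != 0 -> exists t, f t != 0.
Proof.
move=> h; apply: contra_notP (negP h) => nh; apply/eqP; apply: fsum_eq0 => t.
by apply/eqP; apply: contra_notT nh => ht; exists t.
Qed.

Lemma fsum_slice1 {A B : choiceType} (F : B -> C) (a0 : A) :
  fsum (fun t : A * B => if t.1 == a0 then F t.2 else 0) = fsum F.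
Proof.
rewrite /fsum -(@fsbig_widen _ _ _ _ ((fun b => (a0, b)) @` [set: B]) [set: A * B]) //.
  rewrite fsbig_image /=; first by apply: eq_fsbigr => b _; rewrite eqxx.
  by move=> x y _ _ [].
move=> [a b] [_ nI] /=; case: eqP => // e; exfalso; apply: nI; exists b => //.
by rewrite e.
Qed.

Lemma fsum_slice2 {A B : choiceType} (F : A -> C) (b0 : B) :
  fsum (fun t : A * B => if t.2 == b0 then F t.1 else 0) = fsum F.
Proof.
rewrite -(fsum_slice1 F b0) (reindex_fsum (fun t : B * A => (t.2, t.1))) //.
by exists (fun t : A * B => (t.2, t.1)) => -[].
Qed.

Lemma fsum_pair {A B : choiceType} (F : A -> B -> C) :
  finite_set [set t : A * B | F t.1 t.2 != 0] ->
  fsum (fun a => fsum (fun b => F a b)) = fsum (fun t : A * B => F t.1 t.2).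
Proof.
move=> fS; set S := [set t : A * B | F t.1 t.2 != 0] in fS.
have fP : finite_set (fst @` S) by exact: finite_image.
have fQ : finite_set (snd @` S) by exact: finite_image.
have inner a : fsum (fun b => F a b) = \sum_(b \in snd @` S) F a b.
  rewrite /fsum; apply/esym/fsbig_widen => // b [_ nQ].
  case: (eqVneq (F a b) 0) => // h; exfalso; apply: nQ; by exists (a, b).
rewrite /fsum.
transitivity (\sum_(a \in fst @` S) \sum_(b \in snd @` S) F a b).
  rewrite -(@fsbig_widen _ _ _ _ (fst @` S) [set: A]) //.
    by apply: eq_fsbigr => a _; exact: inner.
  move=> a [_ nP]; rewrite /= (_ : \sum_(t \in [set: B]) F a t = \sum_(b \in snd @` S) F a b); last exact: inner a.
  rewrite fsbig1 // => b _.
  case: (eqVneq (F a b) 0) => // h; exfalso; apply: nP; by exists (a, b).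
rewrite pair_fsbig //; apply: fsbig_widen => // t [_ nt].
case: (eqVneq (F t.1 t.2) 0) => // h; exfalso; by apply: nt; split; [exists t | exists t].
Qed.

Lemma exchange_fsum {A B : choiceType} (F : A -> B -> C) :
  finite_set [set t : A * B | F t.1 t.2 != 0] ->
  fsum (fun a => fsum (fun b => F a b)) = fsum (fun b => fsum (fun a => F a b)).
Proof.
move=> fS; rewrite fsum_pair // fsum_pair.
  rewrite (reindex_fsum (fun t : B * A => (t.2, t.1))) //.
  by exists (fun t : A * B => (t.2, t.1)) => -[].
apply: (sub_finite_set _ (finite_image (fun t : A * B => (t.2, t.1)) fS)) => -[b a] /= h.
by exists (a, b).
Qed.

Lemma finite_preimage_inj {A B : Type} (f : A -> B) (S : set B) :
  injective f -> finite_set S -> finite_set (f @^-1` S).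
Proof. by move=> fi; apply: finite_preimage => x y _ _; exact: fi. Qed.

Lemma fsum_flatten6 {T1 T2 T3 T4 T5 T6 : choiceType}
  (F : T1 -> T2 -> T3 -> T4 -> T5 -> T6 -> C) :
  finite_set [set t : T1 * (T2 * (T3 * (T4 * (T5 * T6)))) |
     F t.1 t.2.1 t.2.2.1 t.2.2.2.1 t.2.2.2.2.1 t.2.2.2.2.2 != 0] ->
  fsum (fun a => fsum (fun b => fsum (fun c => fsum (fun d => fsum (fun e =>
     fsum (fun f => F a b c d e f)))))) =
  fsum (fun t : T1 * (T2 * (T3 * (T4 * (T5 * T6)))) =>
     F t.1 t.2.1 t.2.2.1 t.2.2.2.1 t.2.2.2.2.1 t.2.2.2.2.2).
Proof.
move=> fS.
have sec (U : Type) (g : U -> T1 * (T2 * (T3 * (T4 * (T5 * T6))))) :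
    injective g -> finite_set (g @^-1` [set t | F t.1 t.2.1 t.2.2.1 t.2.2.2.1
                                         t.2.2.2.2.1 t.2.2.2.2.2 != 0]).
  by move=> gi; exact: finite_preimage_inj.
rewrite -(fsum_pair (fun a (u : T2 * (T3 * (T4 * (T5 * T6)))) =>
  F a u.1 u.2.1 u.2.2.1 u.2.2.2.1 u.2.2.2.2)) //.
apply: eq_fsum => a.
rewrite -(fsum_pair (fun b (u : T3 * (T4 * (T5 * T6))) => F a b u.1 u.2.1 u.2.2.1 u.2.2.2));
  last by apply: (sec _ (pair a)) => u v [].
apply: eq_fsum => b.
rewrite -(fsum_pair (fun c (u : T4 * (T5 * T6)) => F a b c u.1 u.2.1 u.2.2));
  last by apply: (sec _ (fun u => (a, (b, u)))) => u v [].
apply: eq_fsum => c.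
rewrite -(fsum_pair (fun d (u : T5 * T6) => F a b c d u.1 u.2));
  last by apply: (sec _ (fun u => (a, (b, (c, u))))) => u v [].
apply: eq_fsum => d; rewrite -(fsum_pair (F a b c d)) //.
by apply: (sec _ (fun u => (a, (b, (c, (d, u)))))) => u v [].
Qed.

Lemma finite_int_itv (lo hi : int) : finite_set [set k : int | lo <= k <= hi].
Proof.
have fI : finite_set ((fun i : nat => lo + i%:Z) @` `I_(absz (hi - lo)).+1).
  by apply: finite_image; exact: finite_II.
apply: (sub_finite_set _ fI) => k /= /andP[h1 h2].
exists (absz (k - lo)); rewrite /=; lia.
Qed.

Lemma fsum_int_ord (N : nat) (f : int -> C) :
  (forall k, (k < 0) || (N%:Z < k) -> f k = 0) -> fsum f = \sum_(j < N.+1) f j%:Z.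
Proof.
move=> h; rewrite /fsum (fsbigTE [fset (nat_of_ord j)%:Z | j in 'I_N.+1]%fset).
  by rewrite big_imfset /= ?big_enum // => i j _ _ /= [] /val_inj.
move=> k hk; apply: h; apply: contraT; rewrite negb_or -!leNgt => /andP[h1 h2].
case/negP: hk; apply/imfsetP.
have hlt : (absz k < N.+1)%N by lia.
by exists (Ordinal hlt) => //=; lia.
Qed.

Lemma finite_lbound {T : choiceType} (S : set T) (f : T -> int) :
  finite_set S -> exists L, forall t, S t -> L <= f t.
Proof.
move=> /finite_fsetP [X ->]; exists (- \sum_(t <- X) `|f t|) => t /= tX.
rewrite (big_rem t) //=.
have h1 : 0 <= \sum_(u <- rem t X) `|f u| by apply: sumr_ge0.
have h2 : - `|f t| <= f t by rewrite lerNl -normrN ler_norm.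
by apply: le_trans h2; rewrite lerN2 lerDl.
Qed.

Lemma natr_fact_neq0 (k : nat) : (k`!)%:R != 0 :> C.
Proof. by rewrite pnatr_eq0 -lt0n fact_gt0. Qed.

Lemma ibin0 (a : int) : ibin a 0 = 1.
Proof. by rewrite /ibin big_ord0 fact0 divr1. Qed.

Lemma ibin0nS (k : nat) : ibin 0 k.+1 = 0.
Proof. by rewrite /ibin big_ord_recl /= subr0 mul0r mul0r. Qed.

Lemma ibinS (a : int) (k : nat) : ibin (a + 1) k.+1 = ibin a k.+1 + ibin a k.
Proof.
rewrite /ibin big_ord_recl big_ord_recr /=.
have -> : \prod_(i < k) ((a + 1 - (bump 0 i)%:Z)%:~R : C) = \prod_(i < k) (a - i%:Z)%:~R.
  by apply: eq_bigr => i _; congr intmul; rewrite /bump /= ?add1n; lia.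
rewrite factS natrM !rmorphB /= !rmorphD /= ?rmorph0 ?rmorph1 ?intr1 subr0 -!pmulrn.
have hk := natr_fact_neq0 k.
have hk1 : k%:R + 1 != 0 :> C by rewrite natr1 pnatr_eq0.
by rewrite -natr1; field; apply/andP.
Qed.

Definition ibin_conv (a b : int) (N : nat) : C :=
  \sum_(j < N.+1) ibin a j * ibin b (N - j).

Lemma ibin_conv0 a b : ibin_conv a b 0 = 1.
Proof. by rewrite /ibin_conv big_ord_recl big_ord0 !ibin0 mul1r addr0. Qed.

Lemma ibin_convS a b M :
  ibin_conv (a + 1) b M.+1 = ibin_conv a b M.+1 + ibin_conv a b M.
Proof.
rewrite /ibin_conv big_ord_recl [in X in _ = X + _]big_ord_recl !ibin0 !mul1r subn0.
under eq_bigr => i _ do rewrite /bump /= ?add1n subSS ibinS mulrDl.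
under [in X in _ = _ + X + _]eq_bigr => i _ do rewrite /bump /= ?add1n subSS.
by rewrite big_split /= addrA.
Qed.

Lemma ibin_vandermonde (a b : int) (N : nat) : ibin_conv a b N = ibin (a + b) N.
Proof.
have base M : ibin_conv 0 b M = ibin (0 + b) M.
  rewrite /ibin_conv big_ord_recl ibin0 mul1r subn0 add0r big1 ?addr0 // => i _.
  by rewrite /bump /= ?add1n ibin0nS mul0r.
have up a' : (forall M, ibin_conv a' b M = ibin (a' + b) M) ->
    forall M, ibin_conv (a' + 1) b M = ibin (a' + 1 + b) M.
  move=> IH [|M]; first by rewrite ibin_conv0 ibin0.
  by rewrite ibin_convS !IH (addrC a' 1) -addrA (addrC 1) ibinS.
have down a' : (forall M, ibin_conv (a' + 1) b M = ibin (a' + 1 + b) M) ->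
    forall M, ibin_conv a' b M = ibin (a' + b) M.
  move=> IH; elim=> [|M IHM]; first by rewrite ibin_conv0 ibin0.
  have := ibin_convS a' b M; rewrite IH IHM (addrC a' 1) -addrA (addrC 1) ibinS.
  by move=> e; apply: (addIr (ibin (a' + b) M)); rewrite -e.
case: a => n; first by elim: n N => [|n IH]; [exact: base | rewrite -addn1 PoszD; exact: up].
rewrite NegzE; elim: n.+1 N => [|k IH] M; first by rewrite oppr0; exact: base.
by apply: down; rewrite -addn1 PoszD opprD -addrA addNr addr0; exact: IH.
Qed.

Lemma fsum_ibin_vandermonde (k K n : int) :
  fsum (fun n1 : int => if (0 <= n1) && (0 <= n - n1)
     then ibin k `|n1| * ibin (K - k) `|n - n1| else 0)
  = if 0 <= n then ibin K `|n| else 0.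
Proof.
case: (ltrP n 0) => hn.
  by apply: fsum_eq0 => n1; case: ifP => // /andP[h1 h2]; lia.
have [N ->] : exists N : nat, n = N%:Z by exists (absz n); lia.
rewrite (fsum_int_ord N); last by move=> n1 /orP[h|h]; case: ifP => // /andP[h1 h2]; lia.
rewrite [in RHS](_ : K = k + (K - k)); last by ring.
rewrite -ibin_vandermonde; apply: eq_bigr => j _.
have hj : (j <= N)%N by rewrite -ltnS.
rewrite ifT; last by apply/andP; split; lia.
by have -> : `|(N%:Z - j%:Z)|%N = (N - j)%N by lia.
Qed.

Definition lbounded (f : int -> C) := exists N, forall k, k < N -> f k = 0.

Definition lconv (f g : int -> C) (k : int) : C := fsum (fun j => f j * g (k - j)).

(* shift_coef f m n is the coefficient of x^m z^n in f(x + z), expanded in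
   nonnegative powers of z; [shift_coef_conv] says (f g)(x+z) = f(x+z) g(x+z). *)
Definition shift_coef (f : int -> C) (m n : int) : C :=
  if 0 <= n then ibin (m + n) `|n| * f (m + n) else 0.

Lemma shift_coef_conv (f g : int -> C) (m n : int) : lbounded f -> lbounded g ->
  fsum (fun n1 : int => fsum (fun m1 : int =>
    shift_coef f m1 n1 * shift_coef g (m - m1) (n - n1))) = shift_coef (lconv f g) m n.
Proof.
move=> [Nf hf] [Ng hg].
transitivity (fsum (fun n1 : int => fsum (fun k : int =>
   (if (0 <= n1) && (0 <= n - n1) then ibin k `|n1| * ibin (m + n - k) `|n - n1| else 0)
   * (f k * g (m + n - k))))).
  apply: eq_fsum => n1; rewrite (reindex_fsum (fun k => k - n1)); last first.
    by exists (fun k => k + n1) => k /=; rewrite ?subrK ?addrK.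
  apply: eq_fsum => k; rewrite /shift_coef subrK.
  have -> : m - (k - n1) + (n - n1) = m + n - k by ring.
  by case: (0 <= n1); case: (0 <= n - n1) => /=; ring.
rewrite exchange_fsum; last first.
  apply: (sub_finite_set _ (finite_setX (finite_int_itv 0 n) (finite_int_itv Nf (m + n - Ng)))).
  move=> [n1 k] /=; case: ifP => [/andP[h1 h2]|]; last by rewrite mul0r eqxx.
  rewrite !mulf_eq0 !negb_or => /andP[_ /andP[hfk hgk]].
  have l1 : Nf <= k by case: (ltrP k Nf) => // /hf e; rewrite e eqxx in hfk.
  have l2 : Ng <= m + n - k by case: (ltrP (m + n - k) Ng) => // /hg e; rewrite e eqxx in hgk.
  by split; apply/andP; split; lia.
rewrite /shift_coef /lconv; case: ifP => hn; last first.
  apply: fsum_eq0 => k; rewrite fsumMr fsum_eq0 ?mul0r // => n1.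
  by case: ifP => // /andP[h1 h2]; lia.
rewrite -fsumMl; apply: eq_fsum => k.
by rewrite fsumMr (fsum_ibin_vandermonde k (m + n) n) hn.
Qed.

Lemma shift_coef_delta0 (m n : int) :
  shift_coef (fun k => if k == 0 then 1 else 0) m n = if (m == 0) && (n == 0) then 1 else 0.
Proof.
rewrite /shift_coef; case: (eqVneq n 0) => [->|hn].
  by rewrite addr0 lexx ibin0 mul1r andbT.
rewrite andbF; case: ifP => // hn0; case: (eqVneq (m + n) 0) => [e|]; last by rewrite mulr0.
rewrite e; have [k ->] : exists k : nat, `|n|%N = k.+1 by exists (`|n|.-1)%N; lia.
by rewrite ibin0nS mul0r.
Qed.

(* A series s : series W is a W-indexed family of formal series in two
   variables x, z, s r m n being the coefficient of x^m z^n; a kernel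
   K : kernel X Y is an X-by-Y matrix of such series, acting on series by
   kapp.  [Defs.dapp] is kapp for X = Y = (I * I) * I. *)
Notation series W := (W -> int -> int -> C).
Notation kernel X Y := (X -> Y -> int -> int -> C).

Definition kapp {X Y : choiceType} (K : kernel X Y) (s : series Y) : series X :=
  fun p m n => fsum (fun r => fsum (fun n1 : int => fsum (fun m1 : int =>
      K p r m1 n1 * s r (m - m1) (n - n1)))).

Definition kcomp {X Y W : choiceType} (A : kernel X Y) (B : kernel Y W) : kernel X W :=
  fun p r m n => kapp A (fun q => B q r) p m n.

Definition kid {X : choiceType} : kernel X X :=
  fun p q m n => if (p == q) && (m == 0) && (n == 0) then 1 else 0.

Definition cst2 {W : choiceType} (w : W -> C) : series W :=
  fun p m n => if (m == 0) && (n == 0) then w p else 0.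

(* Suffixes: lbx / lbz = bounded below in the exponent of x / z; colfin =
   finitely many nonzero rows in each column; _z = for each fixed power of z;
   zpos = no negative powers of z. *)
Section Finiteness.
Context {X Y W : choiceType}.

Definition kernel_lbx (K : kernel X Y) :=
  forall p q n, exists M, forall m, m < M -> K p q m n = 0.
Definition kernel_lbz (K : kernel X Y) :=
  forall p q, exists N, forall m n, n < N -> K p q m n = 0.
Definition kernel_col_lbz (K : kernel X Y) :=
  forall q, exists N, forall p m n, n < N -> K p q m n = 0.
Definition kernel_zpos (K : kernel X Y) :=
  forall p q m n, n < 0 -> K p q m n = 0.
Definition kernel_colfin (K : kernel X Y) :=
  forall q, finite_set [set p | exists m n, K p q m n != 0].
Definition kernel_colfin_z (K : kernel X Y) :=
  forall q n, finite_set [set p | exists m, K p q m n != 0].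

Definition series_lbx (s : series W) :=
  forall r n, exists M, forall m, m < M -> s r m n = 0.
Definition series_lbz (s : series W) :=
  forall r, exists N, forall m n, n < N -> s r m n = 0.
Definition series_unif_lbz (s : series W) :=
  exists N, forall r m n, n < N -> s r m n = 0.
Definition series_fin (s : series W) :=
  finite_set [set r | exists m n, s r m n != 0].
Definition series_fin_z (s : series W) :=
  forall n, finite_set [set r | exists m, s r m n != 0].

End Finiteness.

(* Elements of W (x) C((x))((z)) and the kernels preserving them. *)
Definition laurent_series {W : choiceType} (s : series W) :=
  [/\ series_fin s, series_lbz s & series_lbx s].
Definition laurent_kernel {X Y : choiceType} (K : kernel X Y) :=
  [/\ kernel_colfin K, kernel_lbz K & kernel_lbx K].

Lemma nz_lb {N n : int} {c : C} : (n < N -> c = 0) -> c != 0 -> N <= n.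
Proof. by move=> h hc; case: (ltrP n N) => // /h e; rewrite e eqxx in hc. Qed.

Lemma kapp_nz {X Y : choiceType} (K : kernel X Y) (s : series Y) p m n :
  kapp K s p m n != 0 ->
  exists r n1 m1, K p r m1 n1 != 0 /\ s r (m - m1) (n - n1) != 0.
Proof.
move=> /fsum_neq0 [r /fsum_neq0 [n1 /fsum_neq0 [m1]]].
by rewrite mulf_eq0 negb_or => /andP[h1 h2]; exists r, n1, m1.
Qed.

Lemma kernel_col_lbz_lbz {X Y : choiceType} (K : kernel X Y) :
  kernel_col_lbz K -> kernel_lbz K.
Proof. by move=> h p q; have [N hN] := h q; exists N => m n /hN; apply. Qed.

Lemma cst2_laurent {W : choiceType} (w : W -> C) : fin_supp w -> laurent_series (cst2 w).
Proof.
move=> fw; split.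
- apply: (sub_finite_set _ fw) => r [a [b]]; rewrite /cst2.
  by case: ifP => //; rewrite eqxx.
- move=> r; exists 0 => a b hb.
  by rewrite /cst2 (lt_eqF hb) andbF.
- move=> r b; exists 0 => a ha.
  by rewrite /cst2 (lt_eqF ha).
Qed.

Lemma basis_fin_supp {W : choiceType} (r : W) : fin_supp (basis r).
Proof.
apply: (sub_finite_set _ (finite_set1 r)) => r' /=; rewrite /basis.
have [->|ne] := eqVneq r' r; first by []. by rewrite eqxx.
Qed.

Section KernelAction.
Context {X Y : choiceType}.
Implicit Types (K : kernel X Y) (s : series Y).

Lemma kapp_lbz K s : kernel_lbz K -> series_fin s -> series_lbz s -> series_lbz (kapp K s).
Proof.
move=> hK fs hs p.
have [Ns hNs] := @choice _ _ (fun r (N : int) => forall a b, b < N -> s r a b = 0) hs.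
have [NK hNK] := @choice _ _ (fun r (N : int) => forall m n, n < N -> K p r m n = 0) (hK p).
have [L hL] := @finite_lbound _ _ (fun r => NK r + Ns r) fs.
exists L => a b hb; apply/eqP; apply: contraT => /kapp_nz [r [n1 [m1 [h1 h2]]]].
have l1 := nz_lb (hNK r m1 n1) h1; have l2 := nz_lb (hNs r _ _) h2.
have l3 : L <= NK r + Ns r by apply: hL; exists (a - m1), (b - n1).
by move: l1 l2 l3 hb; set x := NK r; set y := Ns r => *; lia.
Qed.

Lemma kapp_lbx K s : kernel_lbz K -> kernel_lbx K ->
  series_fin s -> series_lbz s -> series_lbx s -> series_lbx (kapp K s).
Proof.
move=> hK mK fs hs ms p n.
have [Ns hNs] := @choice _ _ (fun r (N : int) => forall a b, b < N -> s r a b = 0) hs.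
have [NK hNK] := @choice _ _ (fun r (N : int) => forall m n, n < N -> K p r m n = 0) (hK p).
have [Ms hMs] := @choice _ _ (fun u (M : int) => forall a, a < M -> s u.1 a u.2 = 0)
   (fun u => ms u.1 u.2).
have [MK hMK] := @choice _ _ (fun u (M : int) => forall a, a < M -> K p u.1 a u.2 = 0)
   (fun u => mK p u.1 u.2).
have fT : finite_set ([set r | exists a b, s r a b != 0] `*``
            (fun r => [set n1 : int | NK r <= n1 <= n - Ns r])).
  by apply: finite_setXR => // r _; exact: finite_int_itv.
have [L hL] := @finite_lbound _ _ (fun u => MK u + Ms (u.1, n - u.2)) fT.
exists L => a ha; apply/eqP; apply: contraT => /kapp_nz [r [n1 [m1 [h1 h2]]]].
have l1 := nz_lb (hNK r m1 n1) h1; have l2 := nz_lb (hNs r _ _) h2.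
have l4 := nz_lb (hMK (r, n1) m1) h1; have l5 := nz_lb (hMs (r, n - n1) _) h2.
have l3 : L <= MK (r, n1) + Ms (r, n - n1).
  apply: hL; split; first by exists (a - m1), (n - n1).
  by move: l1 l2; set x := NK r; set y := Ns r => * /=; apply/andP; split; lia.
by move: l3 l4 l5 ha; set x := MK _; set y := Ms _ => *; lia.
Qed.

Lemma kapp_fin K s : kernel_colfin K -> series_fin s -> series_fin (kapp K s).
Proof.
move=> cK fs; apply: (sub_finite_set _ (bigcup_finite fs (fun r _ => cK r))).
move=> p /= [a [b /kapp_nz [r [n1 [m1 [h1 h2]]]]]].
by exists r; [exists (a - m1), (b - n1) | exists m1, n1].
Qed.

Lemma kapp_unif_lbz K s :
  kernel_col_lbz K -> series_fin s -> series_lbz s -> series_unif_lbz (kapp K s).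
Proof.
move=> hK fs hs.
have [Ns hNs] := @choice _ _ (fun r (N : int) => forall a b, b < N -> s r a b = 0) hs.
have [NK hNK] := @choice _ _ (fun r (N : int) => forall q m n, n < N -> K q r m n = 0) hK.
have [L hL] := @finite_lbound _ _ (fun r => NK r + Ns r) fs.
exists L => p a b hb; apply/eqP; apply: contraT => /kapp_nz [r [n1 [m1 [h1 h2]]]].
have l1 := nz_lb (hNK r p m1 n1) h1; have l2 := nz_lb (hNs r _ _) h2.
have l3 : L <= NK r + Ns r by apply: hL; exists (a - m1), (b - n1).
by move: l1 l2 l3 hb; set x := NK r; set y := Ns r => *; lia.
Qed.

Lemma kapp_fin_z K s : kernel_col_lbz K -> kernel_colfin_z K ->
  series_fin s -> series_lbz s -> series_fin_z (kapp K s).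
Proof.
move=> hK cK fs hs n.
have [Ns hNs] := @choice _ _ (fun r (N : int) => forall a b, b < N -> s r a b = 0) hs.
have [NK hNK] := @choice _ _ (fun r (N : int) => forall q m n, n < N -> K q r m n = 0) hK.
have fT : finite_set ([set r | exists a b, s r a b != 0] `*``
            (fun r => [set n1 : int | NK r <= n1 <= n - Ns r])).
  by apply: finite_setXR => // r _; exact: finite_int_itv.
apply: (sub_finite_set _ (bigcup_finite fT (fun u _ => cK u.1 u.2))).
move=> p /= [a /kapp_nz [r [n1 [m1 [h1 h2]]]]].
have l1 := nz_lb (hNK r p m1 n1) h1; have l2 := nz_lb (hNs r _ _) h2.
exists (r, n1); last by exists m1.
split; first by exists (a - m1), (n - n1).
by move: l1 l2; set x := NK r; set y := Ns r => * /=; apply/andP; split; lia.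
Qed.

Lemma kapp_laurent K s : laurent_kernel K -> laurent_series s -> laurent_series (kapp K s).
Proof.
move=> [k1 k2 k3] [s1 s2 s3]; split.
- exact: kapp_fin.
- exact: kapp_lbz.
- exact: kapp_lbx.
Qed.

Lemma kapp_cst2_basis (K : kernel X Y) r : kapp K (cst2 (basis r)) = fun q a b => K q r a b.
Proof.
apply: funext => q; apply: funext => a; apply: funext => b.
rewrite /kapp (fsum_single _ r); last first.
  move=> r' h; apply: fsum_eq0 => n1; apply: fsum_eq0 => m1.
  by rewrite /cst2 /basis (negbTE h); case: ifP; rewrite mulr0.
rewrite (fsum_single _ b); last first.
  move=> n1 h; apply: fsum_eq0 => m1; rewrite /cst2.
  by rewrite (_ : b - n1 == 0 = false) ?andbF ?mulr0 // subr_eq0 eq_sym; exact: negbTE.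
rewrite (fsum_single _ a); first by rewrite /cst2 /basis !subrr !eqxx mulr1.
move=> m1 h; rewrite /cst2.
by rewrite (_ : a - m1 == 0 = false) ?mulr0 // subr_eq0 eq_sym; exact: negbTE.
Qed.

End KernelAction.

Lemma kapp_id {W : choiceType} (s : series W) : kapp kid s = s.
Proof.
apply: funext => p; apply: funext => m; apply: funext => n.
rewrite /kapp (fsum_single _ p); last first.
  by move=> r h; apply: fsum_eq0 => n1; apply: fsum_eq0 => m1; rewrite /kid eq_sym (negbTE h) mul0r.
rewrite (fsum_single _ 0); last first.
  by move=> n1 h; apply: fsum_eq0 => m1; rewrite /kid (negbTE h) andbF mul0r.
rewrite (fsum_single _ 0); first by rewrite /kid !eqxx mul1r !subr0.
by move=> m1 h; rewrite /kid (negbTE h) andbF mul0r.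
Qed.

Section Associativity.
Context {X Y W : choiceType}.
Variables (A : kernel X Y) (B : kernel Y W) (s : series W).

Definition assoc_term p m n (q : Y) (n1 m1 : int) (r : W) (n2 m2 : int) : C :=
  A p q m1 n1 * (B q r m2 n2 * s r (m - m1 - m2) (n - n1 - n2)).

Definition assoc_finite p m n :=
  finite_set [set t : Y * (int * (int * (W * (int * int)))) |
    assoc_term p m n t.1 t.2.1 t.2.2.1 t.2.2.2.1 t.2.2.2.2.1 t.2.2.2.2.2 != 0].

(* Both sides are the sum of assoc_term over the same six indices, listed
   in two orders related by the bijection h. *)
Lemma kappA_at p m n :
  assoc_finite p m n -> kapp A (kapp B s) p m n = kapp (kcomp A B) s p m n.
Proof.
move=> fS.
pose h (t : Y * (int * (int * (W * (int * int))))) : W * (int * (int * (Y * (int * int)))) :=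
  (t.2.2.2.1, (t.2.1 + t.2.2.2.2.1, (t.2.2.1 + t.2.2.2.2.2, (t.1, (t.2.1, t.2.2.1))))).
pose hi (t : W * (int * (int * (Y * (int * int))))) : Y * (int * (int * (W * (int * int)))) :=
  (t.2.2.2.1, (t.2.2.2.2.1, (t.2.2.2.2.2, (t.1, (t.2.1 - t.2.2.2.2.1, t.2.2.1 - t.2.2.2.2.2))))).
have hK : cancel h hi.
  by case=> q [n1 [m1 [r [n2 m2]]]]; rewrite /h /hi /=; congr (_,(_,(_,(_,(_,_))))); ring.
have hiK : cancel hi h.
  by case=> r [a [b [q [n1 m1]]]]; rewrite /h /hi /=; congr (_,(_,(_,(_,(_,_))))); ring.
pose F (r : W) (a b : int) (q : Y) (n1 m1 : int) : C :=
  A p q m1 n1 * B q r (b - m1) (a - n1) * s r (m - b) (n - a).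
have Fh t : F (h t).1 (h t).2.1 (h t).2.2.1 (h t).2.2.2.1 (h t).2.2.2.2.1 (h t).2.2.2.2.2
   = assoc_term p m n t.1 t.2.1 t.2.2.1 t.2.2.2.1 t.2.2.2.2.1 t.2.2.2.2.2.
  case: t => q [n1 [m1 [r [n2 m2]]]]; rewrite /F /assoc_term /h /= -mulrA.
  by congr (_ * (_ * _)); [congr B; ring | congr s; ring].
transitivity (fsum (fun t : Y * (int * (int * (W * (int * int)))) =>
     assoc_term p m n t.1 t.2.1 t.2.2.1 t.2.2.2.1 t.2.2.2.2.1 t.2.2.2.2.2)).
  rewrite -(fsum_flatten6 (assoc_term p m n)) //.
  apply: eq_fsum => q; apply: eq_fsum => n1; apply: eq_fsum => m1.
  rewrite -fsumMl; apply: eq_fsum => r; rewrite -fsumMl; apply: eq_fsum => n2.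
  rewrite -fsumMl; apply: eq_fsum => m2; rewrite /assoc_term.
  by congr (_ * (_ * s _ _ _)); ring.
transitivity (fsum (fun t : W * (int * (int * (Y * (int * int)))) =>
     F t.1 t.2.1 t.2.2.1 t.2.2.2.1 t.2.2.2.2.1 t.2.2.2.2.2)).
  rewrite (reindex_fsum h); last exact: (Bijective hK hiK).
  by apply: eq_fsum => t; rewrite Fh.
rewrite -(fsum_flatten6 F).
  apply: eq_fsum => r; apply: eq_fsum => a; apply: eq_fsum => b.
  rewrite -fsumMr; apply: eq_fsum => q; rewrite -fsumMr; apply: eq_fsum => n1.
  by rewrite -fsumMr.
apply: (sub_finite_set _ (finite_image h fS)) => t Ht; exists (hi t); last by rewrite hiK.
have E := Fh (hi t); rewrite hiK in E.
by rewrite /= -E.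
Qed.

(* Since all x-exponents are bounded below, the support of assoc_term is finite
   as soon as its projection forgetting the x-exponents is. *)
Definition assoc_zsupport p (n : int) :=
  [set u : Y * (int * (W * int)) | exists m1 m2 a,
     A p u.1 m1 u.2.1 != 0 /\ B u.1 u.2.2.1 m2 u.2.2.2 != 0 /\
     s u.2.2.1 a (n - u.2.1 - u.2.2.2) != 0].

Lemma assoc_finite_of_zsupport p m n :
  kernel_lbx A -> kernel_lbx B -> series_lbx s ->
  finite_set (assoc_zsupport p n) -> assoc_finite p m n.
Proof.
move=> hA hB hs fQ.
have [MA hMA] := @choice _ _ (fun qn (M : int) => forall m1, m1 < M -> A p qn.1 m1 qn.2 = 0)
   (fun qn => hA p qn.1 qn.2).
have [MB hMB] := @choice _ _ (fun u (M : int) => forall m1, m1 < M -> B u.1 u.2.1 m1 u.2.2 = 0)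
   (fun u => hB u.1 u.2.1 u.2.2).
have [Ms hMs] := @choice _ _ (fun u (M : int) => forall a, a < M -> s u.1 a u.2 = 0)
   (fun u => hs u.1 u.2).
pose box (u : Y * (int * (W * int))) : set (int * int) :=
  let ma := MA (u.1, u.2.1) in let mb := MB (u.1, (u.2.2.1, u.2.2.2)) in
  let ms := Ms (u.2.2.1, n - u.2.1 - u.2.2.2) in
  [set m1 : int | ma <= m1 <= m - ms - mb] `*` [set m2 : int | mb <= m2 <= m - ms - ma].
pose phi (v : (Y * (int * (W * int))) * (int * int)) : Y * (int * (int * (W * (int * int)))) :=
  (v.1.1, (v.1.2.1, (v.2.1, (v.1.2.2.1, (v.1.2.2.2, v.2.2))))).
have fin : finite_set (phi @` (assoc_zsupport p n `*`` box)).
  apply: finite_image; apply: finite_setXR => // u _.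
  by apply: finite_setX; exact: finite_int_itv.
apply: (sub_finite_set _ fin) => -[q [n1 [m1 [r [n2 m2]]]]] /=.
rewrite /assoc_term !mulf_eq0 !negb_or => /and3P[hA0 hB0 hs0].
exists ((q, (n1, (r, n2))), (m1, m2)) => //=.
have l1 := nz_lb (hMA (q, n1) m1) hA0.
have l2 := nz_lb (hMB (q, (r, n2)) m2) hB0.
have l3 := nz_lb (hMs (r, n - n1 - n2) (m - m1 - m2)) hs0.
split; first by exists m1, m2, (m - m1 - m2).
move: l1 l2 l3; rewrite /box /=; set a := MA _; set b := MB _; set c := Ms _.
by move=> l1 l2 l3; split; apply/andP; split; lia.
Qed.

Lemma zsupport_fin p n : kernel_lbz A -> kernel_colfin B -> kernel_lbz B ->
  series_fin s -> series_lbz s -> finite_set (assoc_zsupport p n).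
Proof.
move=> hA cB hB fs hs.
have [NA hNA] := @choice _ _ (fun q (N : int) => forall m n, n < N -> A p q m n = 0)
   (fun q => hA p q).
have [NB hNB] := @choice _ _ (fun u (N : int) => forall m n, n < N -> B u.1 u.2 m n = 0)
   (fun u => hB u.1 u.2).
have [Ns hNs] := @choice _ _ (fun r (N : int) => forall a b, b < N -> s r a b = 0) hs.
pose psi (v : W * (Y * (int * int))) : Y * (int * (W * int)) :=
  (v.2.1, (v.2.2.1, (v.1, v.2.2.2))).
pose T := [set r | exists a b, s r a b != 0] `*``
   (fun r => [set q | exists m n, B q r m n != 0] `*``
     (fun q => [set n1 : int | NA q <= n1 <= n - Ns r - NB (q, r)] `*`
               [set n2 : int | NB (q, r) <= n2 <= n - Ns r - NA q])).
have fT : finite_set (psi @` T).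
  apply: finite_image; apply: finite_setXR => // r _.
  by apply: finite_setXR => // q _; apply: finite_setX; exact: finite_int_itv.
apply: (sub_finite_set _ fT) => -[q [n1 [r n2]]] /= [m1 [m2 [a [hA0 [hB0 hs0]]]]].
exists (r, (q, (n1, n2))) => //.
have l1 := nz_lb (hNA q m1 n1) hA0.
have l2 := nz_lb (hNB (q, r) m2 n2) hB0.
have l3 := nz_lb (hNs r a (n - n1 - n2)) hs0.
split; first by exists a, (n - n1 - n2).
split; first by exists m2, n2.
move: l1 l2 l3; set x := NA _; set y := NB _; set z := Ns _ => l1 l2 l3.
by split => /=; apply/andP; split; lia.
Qed.

Lemma zsupport_fin_zpos p n : kernel_zpos A -> kernel_zpos B -> kernel_colfin_z B ->
  series_unif_lbz s -> series_fin_z s -> finite_set (assoc_zsupport p n).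
Proof.
move=> hA hB cB [Ns hNs] fs.
pose psi (v : int * (int * (W * Y))) : Y * (int * (W * int)) :=
  (v.2.2.2, (v.1, (v.2.2.1, v.2.1))).
pose T := [set n1 : int | 0 <= n1 <= n - Ns] `*``
   (fun n1 => [set n2 : int | 0 <= n2 <= n - Ns] `*``
     (fun n2 => [set r | exists a, s r a (n - n1 - n2) != 0] `*``
        (fun r => [set q | exists m, B q r m n2 != 0]))).
have fT : finite_set (psi @` T).
  apply: finite_image; apply: finite_setXR; first exact: finite_int_itv.
  move=> n1 _; apply: finite_setXR; first exact: finite_int_itv.
  by move=> n2 _; apply: finite_setXR.
apply: (sub_finite_set _ fT) => -[q [n1 [r n2]]] /= [m1 [m2 [a [hA0 [hB0 hs0]]]]].
exists (n1, (n2, (r, q))) => //.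
have l1 := nz_lb (hA p q m1 n1) hA0.
have l2 := nz_lb (hB q r m2 n2) hB0.
have l3 := nz_lb (hNs r a (n - n1 - n2)) hs0.
rewrite /T /=.
split; first by apply/andP; split; lia.
split; first by apply/andP; split; lia.
by split; [exists a | exists m2].
Qed.

Lemma zsupport_fin_col p n : kernel_zpos A -> kernel_col_lbz B -> kernel_colfin_z B ->
  series_fin s -> series_lbz s -> finite_set (assoc_zsupport p n).
Proof.
move=> hA hB cB fs hs.
have [NB hNB] := @choice _ _ (fun r (N : int) => forall q m n, n < N -> B q r m n = 0) hB.
have [Ns hNs] := @choice _ _ (fun r (N : int) => forall a b, b < N -> s r a b = 0) hs.
pose psi (v : W * (int * (int * Y))) : Y * (int * (W * int)) :=
  (v.2.2.2, (v.2.1, (v.1, v.2.2.1))).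
pose T := [set r | exists a b, s r a b != 0] `*``
   (fun r => [set n1 : int | 0 <= n1 <= n - Ns r - NB r] `*``
     (fun n1 => [set n2 : int | NB r <= n2 <= n - Ns r] `*``
        (fun n2 => [set q | exists m, B q r m n2 != 0]))).
have fT : finite_set (psi @` T).
  apply: finite_image; apply: finite_setXR => // r _.
  apply: finite_setXR; first exact: finite_int_itv.
  by move=> n1 _; apply: finite_setXR => //; exact: finite_int_itv.
apply: (sub_finite_set _ fT) => -[q [n1 [r n2]]] /= [m1 [m2 [a [hA0 [hB0 hs0]]]]].
exists (r, (n1, (n2, q))) => //.
have l1 := nz_lb (hA p q m1 n1) hA0.
have l2 := nz_lb (hNB r q m2 n2) hB0.
have l3 := nz_lb (hNs r a (n - n1 - n2)) hs0.
split; first by exists a, (n - n1 - n2).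
move: l1 l2 l3; set y := NB _; set z := Ns _ => l1 l2 l3.
rewrite /T /=.
split; first by apply/andP; split; lia.
split; first by apply/andP; split; lia.
by exists m2.
Qed.

Lemma kappA_fin : kernel_lbz A -> kernel_lbx A -> laurent_kernel B -> laurent_series s ->
  kapp A (kapp B s) = kapp (kcomp A B) s.
Proof.
move=> a1 a2 [b1 b2 b3] [s1 s2 s3].
apply: funext => p; apply: funext => m; apply: funext => n.
by apply: kappA_at; apply: assoc_finite_of_zsupport => //; apply: zsupport_fin.
Qed.

Lemma kappA_zpos : kernel_zpos A -> kernel_lbx A ->
  kernel_zpos B -> kernel_colfin_z B -> kernel_lbx B ->
  series_unif_lbz s -> series_fin_z s -> series_lbx s ->
  kapp A (kapp B s) = kapp (kcomp A B) s.
Proof.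
move=> a1 a2 b1 b2 b3 s1 s2 s3.
apply: funext => p; apply: funext => m; apply: funext => n.
by apply: kappA_at; apply: assoc_finite_of_zsupport => //; apply: zsupport_fin_zpos.
Qed.

Lemma kappA_col : kernel_zpos A -> kernel_lbx A ->
  kernel_col_lbz B -> kernel_colfin_z B -> kernel_lbx B -> laurent_series s ->
  kapp A (kapp B s) = kapp (kcomp A B) s.
Proof.
move=> a1 a2 b1 b2 b3 [s1 s2 s3].
apply: funext => p; apply: funext => m; apply: funext => n.
by apply: kappA_at; apply: assoc_finite_of_zsupport => //; apply: zsupport_fin_col.
Qed.

End Associativity.

Section Composition.
Context {X Y W : choiceType}.
Variables (A : kernel X Y) (B : kernel Y W).

Lemma kcomp_lbz : kernel_lbz A -> laurent_kernel B -> kernel_lbz (kcomp A B).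
Proof.
move=> a1 [b1 b2 _] p r.
exact: (kapp_lbz A (fun q => B q r) a1 (b1 r) (fun q => b2 q r) p).
Qed.

Lemma kcomp_lbx : kernel_lbz A -> kernel_lbx A -> laurent_kernel B -> kernel_lbx (kcomp A B).
Proof.
move=> a1 a2 [b1 b2 b3] p r n.
exact: (kapp_lbx A (fun q => B q r) a1 a2 (b1 r) (fun q => b2 q r) (fun q => b3 q r) p n).
Qed.

End Composition.

Lemma kapp_kcomp_id {V : choiceType} (A B : kernel V V) (s : series V) :
  laurent_kernel A -> laurent_kernel B -> laurent_series s ->
  kcomp A B = kid -> kapp A (kapp B s) = s.
Proof. by move=> [a1 a2 a3] lB ls AB; rewrite kappA_fin // AB kapp_id. Qed.

(* If S Y = Y A1 A2 on V then S^-1 Y = Y A2^-1 A1^-1; the finiteness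
   hypotheses make every product below well defined and associative. *)
Section Intertwining.
Context {U V : choiceType}.
Variables (Y : kernel U V) (S T : kernel U U) (A1 A2 B1 B2 : kernel V V).
Hypotheses (hY1 : kernel_col_lbz Y) (hY2 : kernel_colfin_z Y) (hY3 : kernel_lbx Y).
Hypotheses (hS1 : kernel_zpos S) (hS2 : kernel_colfin_z S) (hS3 : kernel_lbx S).
Hypotheses (hT1 : kernel_zpos T) (hT3 : kernel_lbx T).
Hypotheses (lA1 : laurent_kernel A1) (lA2 : laurent_kernel A2)
  (lB1 : laurent_kernel B1) (lB2 : laurent_kernel B2).
Hypotheses (iA1 : kcomp A1 B1 = kid) (iA2 : kcomp A2 B2 = kid) (iTS : kcomp T S = kid).
Hypothesis SY : forall w, fin_supp w ->
  kapp S (kapp Y (cst2 w)) = kapp Y (kapp A1 (kapp A2 (cst2 w))).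

Lemma kcomp_SY : kcomp S Y = kcomp (kcomp Y A1) A2.
Proof.
apply: funext => p; apply: funext => r; apply: funext => a; apply: funext => b.
have hY := kernel_col_lbz_lbz Y hY1.
have le := cst2_laurent _ (basis_fin_supp r).
rewrite /kcomp -[fun q => Y q r](kapp_cst2_basis Y r) SY; last exact: basis_fin_supp.
rewrite kappA_fin //; last exact: kapp_laurent.
rewrite kappA_fin //; first by rewrite kapp_cst2_basis.
- exact: kcomp_lbz.
- exact: kcomp_lbx.
Qed.

Lemma kapp_SY (s : series V) : laurent_series s ->
  kapp S (kapp Y (kapp B2 (kapp B1 s))) = kapp Y s.
Proof.
move=> ls; have hY := kernel_col_lbz_lbz Y hY1.
have lz := kapp_laurent _ _ lB1 ls; have lv := kapp_laurent _ _ lB2 lz.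
have lYA1 : kernel_lbz (kcomp Y A1) by exact: kcomp_lbz.
have mYA1 : kernel_lbx (kcomp Y A1) by exact: kcomp_lbx.
rewrite kappA_col // kcomp_SY -kappA_fin // kapp_kcomp_id //.
by rewrite -kappA_fin // kapp_kcomp_id.
Qed.

Lemma intertwine_inv w : fin_supp w ->
  kapp T (kapp Y (cst2 w)) = kapp Y (kapp B2 (kapp B1 (cst2 w))).
Proof.
move=> fw; have lu := cst2_laurent _ fw; have hY := kernel_col_lbz_lbz Y hY1.
have [v1 v2 v3] := kapp_laurent _ _ lB2 (kapp_laurent _ _ lB1 lu).
rewrite -{1}(kapp_SY _ lu) kappA_zpos // ?iTS ?kapp_id //.
- exact: kapp_unif_lbz.
- exact: kapp_fin_z.
- exact: kapp_lbx.
Qed.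

End Intertwining.

(* Operators on V (x) V ((x)) are matrices X p q k of Laurent coefficients in
   x; xkernel X is X seen as a kernel not involving z. *)
Definition mx_inverse {U : choiceType} (X Y : U -> U -> int -> C) :=
  forall p r k, fsum (fun q => fsum (fun m => X p q m * Y q r (k - m)))
              = if (p == r) && (k == 0) then 1 else 0.

Definition entry_lbounded {U : choiceType} (X : U -> U -> int -> C) :=
  forall p q, lbounded (X p q).

Definition col_finite {U : choiceType} (X : U -> U -> int -> C) :=
  forall q, finite_set [set p | exists n, X p q n != 0].

Definition xkernel {U : choiceType} (X : U -> U -> int -> C) : kernel U U :=
  fun p q m n => if n == 0 then X p q m else 0.

Lemma kcomp_xkernel {U : choiceType} (X Y : U -> U -> int -> C) :
  mx_inverse X Y -> kcomp (xkernel X) (xkernel Y) = kid.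
Proof.
move=> XY; apply: funext => p; apply: funext => r; apply: funext => m; apply: funext => n.
rewrite /kcomp /kapp.
transitivity (fsum (fun q => fsum (fun m1 =>
   X p q m1 * (if n == 0 then Y q r (m - m1) else 0)))).
  apply: eq_fsum => q; rewrite (fsum_single _ 0).
    by apply: eq_fsum => m1; rewrite /xkernel eqxx subr0.
  by move=> n1 h; apply: fsum_eq0 => m1; rewrite /xkernel (negbTE h) mul0r.
rewrite /kid; case: (eqVneq n 0) => [_|_]; first by rewrite andbT XY.
by rewrite andbF; apply: fsum_eq0 => q; apply: fsum_eq0 => m1; rewrite mulr0.
Qed.

Lemma xkernel_props {U : choiceType} (X : U -> U -> int -> C) :
  col_finite X -> entry_lbounded X ->
  [/\ kernel_zpos (xkernel X), kernel_colfin_z (xkernel X) & kernel_lbx (xkernel X)].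
Proof.
move=> cX lX; split.
- by move=> p q m n hn; rewrite /xkernel (lt_eqF hn).
- move=> r n; apply: (sub_finite_set _ (cX r)) => q /= [m]; rewrite /xkernel.
  by case: ifP => _; [exists m | rewrite eqxx].
- move=> p q n; have [N hN] := lX p q; exists N => m hm; rewrite /xkernel hN //.
  by case: ifP.
Qed.

Section TensorFactors.
Context {I : choiceType}.
Local Notation I2 := (I * I)%type.
Local Notation I3 := ((I * I) * I)%type.
Implicit Types (X Y : I2 -> I2 -> int -> C).

Lemma kcomp_S23_x X Y : mx_inverse X Y -> kcomp (S23_x X) (S23_x Y) = kid.
Proof.
move=> XY; apply: funext => -[[a b] c]; apply: funext => -[[a' b'] c'].
apply: funext => m; apply: funext => n.
pose j3 (t : I * (I * I)) : I3 := ((t.1, t.2.1), t.2.2).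
rewrite /kcomp /kapp (reindex_fsum j3); last first.
  by exists (fun q : I3 => (q.1.1, (q.1.2, q.2))) => [[x [y z]] | [[x y] z]].
pose G q' := fsum (fun m1 => X (b, c) q' m1 * Y q' (b', c') (m - m1)).
transitivity (fsum (fun t : I * (I * I) =>
   if t.1 == a then (if (n == 0) && (a == a') then G t.2 else 0) else 0)).
  apply: eq_fsum => -[x [y z]] /=; rewrite (fsum_single _ 0); last first.
    by move=> n1 h; apply: fsum_eq0 => m1; rewrite /S23_x /= (negbTE h) mul0r.
  rewrite /S23_x /= subr0; case: (eqVneq a x) => [<-|hx]; last first.
    by apply: fsum_eq0 => m1; rewrite mul0r.
  by case: ((n == 0) && (a == a')) => //; apply: fsum_eq0 => m1; rewrite mulr0.
rewrite (fsum_slice1 (fun q' => if (n == 0) && (a == a') then G q' else 0) a) /kid.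
case: (eqVneq n 0) => hn /=; last by rewrite andbF; apply: fsum_eq0.
case: (eqVneq a a') => ha /=; last first.
  rewrite (_ : (((a, b), c) == ((a', b'), c')) = false); first exact: fsum_eq0.
  by apply/negbTE/eqP => -[e _ _]; rewrite e eqxx in ha.
by rewrite /G XY ha andbT !xpair_eqE eqxx.
Qed.

Lemma S13_xpzE X p q m n : S13_xpz X p q m n =
  if p.1.2 == q.1.2 then shift_coef (X (p.1.1, p.2) (q.1.1, q.2)) m n else 0.
Proof. by rewrite /S13_xpz /shift_coef; case: (0 <= n); case: (_ == _). Qed.

Lemma kcomp_S13_xpz X Y : entry_lbounded X -> entry_lbounded Y ->
  mx_inverse X Y -> kcomp (S13_xpz X) (S13_xpz Y) = kid.
Proof.
move=> lX lY XY; apply: funext => -[[a b] c]; apply: funext => -[[a' b'] c'].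
apply: funext => m; apply: funext => n.
pose k3 (t : I2 * I) : I3 := ((t.1.1, t.2), t.1.2).
rewrite /kcomp /kapp (reindex_fsum k3); last first.
  by exists (fun q : I3 => ((q.1.1, q.2), q.1.2)) => [[[x z] y] | [[x y] z]].
pose H q' := shift_coef (lconv (X (a, c) q') (Y q' (a', c'))) m n.
transitivity (fsum (fun t : I2 * I => if t.2 == b then (if b == b' then H t.1 else 0) else 0)).
  apply: eq_fsum => -[[x z] y] /=; rewrite /H -shift_coef_conv //.
  case: (eqVneq b y) => [<-|hy]; last first.
    by apply: fsum_eq0 => n1; apply: fsum_eq0 => m1; rewrite S13_xpzE /= (negbTE hy) mul0r.
  case: (eqVneq b b') => [<-|hb]; last first.
    by apply: fsum_eq0 => n1; apply: fsum_eq0 => m1; rewrite [X in _ * X]S13_xpzE /= (negbTE hb) mulr0.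
  by apply: eq_fsum => n1; apply: eq_fsum => m1; rewrite !S13_xpzE /= !eqxx.
rewrite (fsum_slice2 (fun q' => if b == b' then H q' else 0) b) /kid.
case: (eqVneq b b') => [<-|hb]; last first.
  rewrite (_ : ((a, b), c) == ((a', b'), c') = false); first exact: fsum_eq0.
  by apply/negbTE; apply: contra hb => /eqP [_ -> _].
have -> : ((a, b), c) == ((a', b), c') = ((a, c) == (a', c')).
  by rewrite !xpair_eqE eqxx andbT.
transitivity (shift_coef (fun k => if ((a, c) == (a', c')) && (k == 0) then 1 else 0) m n).
  rewrite /H /shift_coef; case: ifP => _; last exact: fsum_eq0.
  by rewrite fsumMl; congr (_ * _); exact: XY.
case: ((a, c) == (a', c')); first by rewrite /= shift_coef_delta0.
by rewrite /shift_coef; case: ifP; rewrite ?mulr0.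
Qed.

End TensorFactors.

Lemma signN1_neq0 : (-1 : C) != 0.
Proof. by rewrite oppr_eq0 oner_eq0. Qed.

Lemma sign_mul_self (k : int) : (-1 : C) ^ k * (-1) ^ k = 1.
Proof.
case: k => n /=; first by rewrite -exprMn mulrNN mulr1 expr1n.
by rewrite -invrM ?unitrX ?unitrN ?unitr1 // -exprMn mulrNN mulr1 expr1n invr1.
Qed.

Lemma sign_mulB (a b : int) : (-1 : C) ^ a * (-1) ^ (b - a) = (-1) ^ b.
Proof. by rewrite -expfzDr ?signN1_neq0 // addrC subrK. Qed.

Lemma sign_addz1 (n : int) : (-1 : C) ^ (n + 1) = - (-1) ^ n.
Proof. by rewrite expfzDr ?signN1_neq0 // expr1z mulrN1. Qed.

(* twist u is u(x) with its tensor factors swapped and x replaced by -x, so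
   that conjugating by it turns an operator S(x) into S^21(-x) = S^-1(x). *)
Section Twist.
Context {I : choiceType}.
Local Notation I2 := (I * I)%type.
Implicit Types (M : I2 -> I2 -> int -> C) (u : I2 -> int -> C) (w : I2 -> C).

Lemma flipK : involutive (@flip I). Proof. by case. Qed.

Lemma flip_bij : bijective (@flip I). Proof. exact: inv_bij flipK. Qed.

Lemma ten_flip (u v : I -> C) : (fun p => ten u v (flip p)) = ten v u.
Proof. by apply: funext => -[a b]; rewrite /ten /= mulrC. Qed.

Lemma fin_supp_flip w : fin_supp w -> fin_supp (fun p => w (flip p)).
Proof.
move=> fw; apply: (sub_finite_set _ (finite_image (@flip I) fw)) => t /= h.
by exists (flip t); rewrite ?flipK.
Qed.

Lemma fin_supp_ten (u v : I -> C) : fin_supp u -> fin_supp v -> fin_supp (ten u v).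
Proof.
move=> fu fv; apply: (sub_finite_set _ (finite_setX fu fv)) => -[a b].
by rewrite /ten /= mulf_eq0 negb_or => /andP[].
Qed.

Definition twist u : I2 -> int -> C := fun p n => (-1) ^ n * u (flip p) n.

Lemma twistK : involutive twist.
Proof.
move=> u; apply: funext => p; apply: funext => n.
by rewrite /twist flipK mulrA sign_mul_self mul1r.
Qed.

Lemma twist_cst w : twist (cst w) = cst (fun p => w (flip p)).
Proof.
apply: funext => p; apply: funext => n.
by rewrite /twist /cst; case: eqP => [->|_]; rewrite ?expr0z ?mul1r ?mulr0.
Qed.

Lemma lapp_Sinv M u : lapp (Sinv M) u = twist (lapp M (twist u)).
Proof.
apply: funext => p; apply: funext => n.
rewrite /twist /lapp -fsumMl [RHS](reindex_fsum (@flip I) _ flip_bij).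
apply: eq_fsum => q; rewrite -fsumMl; apply: eq_fsum => m.
have e : (-1 : C) ^ n * (-1) ^ (n - m) = (-1) ^ m.
  by rewrite -(sign_mulB m n) -mulrA sign_mul_self mulr1.
by rewrite /Sinv /S21 flipK /= -e; ring.
Qed.

Lemma SinvK M : Sinv (Sinv M) = M.
Proof.
apply: funext => p; apply: funext => q; apply: funext => n.
by rewrite /Sinv /S21 !flipK mulrA sign_mul_self mul1r.
Qed.

Lemma lappN M u : lapp (fun p q n => - M p q n) u = fun p n => - lapp M u p n.
Proof.
apply: funext => p; apply: funext => n; rewrite /lapp -fsumN.
by apply: eq_fsum => q; rewrite -fsumN; apply: eq_fsum => m; rewrite mulNr.
Qed.

Lemma DR_twist D u : DR D (twist u) = twist (DL D u).
Proof.
apply: funext => p; apply: funext => n; rewrite /DR /DL /twist -fsumMl.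
by apply: eq_fsum => b /=; ring.
Qed.

Lemma twist_DR D u : twist (DR D u) = DL D (twist u).
Proof.
apply: funext => p; apply: funext => n; rewrite /DR /DL /twist -fsumMl.
by apply: eq_fsum => b /=; ring.
Qed.

Lemma lder_Sinv M : lder (Sinv M) = Sinv (fun p q n => - lder M p q n).
Proof.
apply: funext => p; apply: funext => q; apply: funext => n.
by rewrite /lder /Sinv /S21 sign_addz1; ring.
Qed.

Lemma twist_subP (u v z : I2 -> int -> C) :
  (forall p n, u p n - v p n = z p n) <->
  (forall p n, twist u p n - twist v p n = twist z p n).
Proof.
split => h p n; first by rewrite /twist -mulrBr h.
have := h (flip p) n; rewrite /twist flipK -mulrBr => e.
by rewrite -[LHS]mul1r -(sign_mul_self n) -mulrA e mulrA sign_mul_self mul1r.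
Qed.

Lemma unitary_fixed_flip M w : unitary M -> fin_supp w ->
  lapp M (cst (fun p => w (flip p))) = cst (fun p => w (flip p)) ->
  lapp M (cst w) = cst w.
Proof. by move=> U fw h; have := U w fw; rewrite lapp_Sinv twist_cst h -twist_cst twistK. Qed.

Lemma vacuum_fixed_sym M (vac : I -> C) : unitary M -> fin_supp vac ->
  (forall v, fin_supp v -> lapp M (cst (ten vac v)) = cst (ten vac v)) <->
  (forall v, fin_supp v -> lapp M (cst (ten v vac)) = cst (ten v vac)).
Proof.
move=> U fvac; split => h v fv.
  by apply: (unitary_fixed_flip _ _ U (fin_supp_ten _ _ fv fvac)); rewrite ten_flip; exact: h.
by apply: (unitary_fixed_flip _ _ U (fin_supp_ten _ _ fvac fv)); rewrite ten_flip; exact: h.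
Qed.

Lemma derivation_commutator_twist M D w :
  (forall p n,
      DL D (lapp M (cst (fun p => w (flip p)))) p n
      - lapp M (DL D (cst (fun p => w (flip p)))) p n
      = - lapp (lder M) (cst (fun p => w (flip p))) p n) <->
  (forall p n,
      DR D (lapp (Sinv M) (cst w)) p n - lapp (Sinv M) (DR D (cst w)) p n
      = lapp (lder (Sinv M)) (cst w) p n).
Proof.
rewrite lder_Sinv !lapp_Sinv twist_DR DR_twist twist_cst lappN.
exact: (twist_subP (DL D (lapp M (cst (fun p => w (flip p)))))
   (lapp M (DL D (cst (fun p => w (flip p)))))
   (fun p n => - lapp (lder M) (cst (fun p => w (flip p))) p n)).
Qed.

Lemma derivation_commutator_sym M D :
  (forall w, fin_supp w -> forall p n,
      DL D (lapp M (cst w)) p n - lapp M (DL D (cst w)) p n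
      = - lapp (lder M) (cst w) p n) <->
  (forall w, fin_supp w -> forall p n,
      DR D (lapp (Sinv M) (cst w)) p n - lapp (Sinv M) (DR D (cst w)) p n
      = lapp (lder (Sinv M)) (cst w) p n).
Proof.
split => h w fw.
  by apply/(derivation_commutator_twist M D w); apply: h; exact: fin_supp_flip.
have := proj2 (derivation_commutator_twist M D (fun p => w (flip p))) (h _ (fin_supp_flip _ fw)).
by have -> : (fun p => w (flip (flip p))) = w by apply: funext => p; rewrite flipK.
Qed.

End Twist.

Section Operators.
Context {I : choiceType}.
Local Notation I2 := (I * I)%type.
Local Notation I3 := ((I * I) * I)%type.
Implicit Types (X : I2 -> I2 -> int -> C) (y : I -> I -> int -> I -> C).

Lemma S23_laurent X : col_finite X -> entry_lbounded X -> laurent_kernel (S23_x X).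
Proof.
move=> cX lX; split.
- move=> r; apply: (sub_finite_set _ (finite_image (fun u : I2 => ((r.1.1, u.1), u.2))
    (cX (r.1.2, r.2)))) => -[[a b] c] /= [m [n]].
  rewrite /S23_x /=; case: ifP => [/andP[_ /eqP ->] h|]; last by rewrite eqxx.
  by exists (b, c) => //; exists m.
- by move=> p q; exists 0 => m n hn; rewrite /S23_x (lt_eqF hn).
- move=> p q n; have [N hN] := lX (p.1.2, p.2) (q.1.2, q.2); exists N => m hm.
  by rewrite /S23_x hN //; case: ifP.
Qed.

Lemma S13_laurent X : col_finite X -> entry_lbounded X -> laurent_kernel (S13_xpz X).
Proof.
move=> cX lX; split.
- move=> r; apply: (sub_finite_set _ (finite_image (fun u : I2 => ((u.1, r.1.2), u.2))
    (cX (r.1.1, r.2)))) => -[[a b] c] /= [m [n]].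
  rewrite /S13_xpz /=; case: ifP => [/andP[_ /eqP ->] h|]; last by rewrite eqxx.
  exists (a, c) => //; exists (m + n); apply: contra h => /eqP ->; by rewrite mulr0.
- move=> p q; exists 0 => m n hn; rewrite /S13_xpz.
  by rewrite (_ : (0 <= n) = false) //; apply/negbTE; rewrite -ltNge.
- move=> p q n; have [N hN] := lX (p.1.1, p.2) (q.1.1, q.2); exists (N - n) => m hm.
  by rewrite /S13_xpz hN ?mulr0; [case: ifP | lia].
Qed.

(* Y(x2) (x) 1 as a kernel from V(x)V(x)V to V(x)V. *)
Definition Ykernel y : kernel I2 I3 :=
  fun p r m n => if (m == 0) && (r.2 == p.2) then y r.1.1 r.1.2 n p.1 else 0.

Lemma Ykernel_props y :
  (forall a b n, fin_supp (y a b n)) ->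
  (forall a b, exists N : int, forall n, n < N -> forall i, y a b n i = 0) ->
  [/\ kernel_col_lbz (Ykernel y), kernel_colfin_z (Ykernel y) & kernel_lbx (Ykernel y)].
Proof.
move=> fy ly; split.
- move=> r; have [N hN] := ly r.1.1 r.1.2; exists N => q m n hn.
  by rewrite /Ykernel hN //; case: ifP.
- move=> r n; apply: (sub_finite_set _ (finite_image (fun i => (i, r.2)) (fy r.1.1 r.1.2 n))).
  move=> [i c] /= [m]; rewrite /Ykernel /=; case: ifP => [/andP[_ /eqP ->] h|]; last by rewrite eqxx.
  by exists i.
- by move=> p q n; exists 0 => m hm; rewrite /Ykernel (lt_eqF hm).
Qed.

Lemma Y1d_kapp y (u : series I3) : Y1d y u = kapp (Ykernel y) u.
Proof.
apply: funext => p; apply: funext => m; apply: funext => n.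
rewrite /kapp /Y1d -(fsum_slice2 (fun ab : I2 =>
  fsum (fun k : int => y ab.1 ab.2 k p.1 * u (ab, p.2) m (n - k))) p.2).
apply: eq_fsum => -[ab c] /=; case: (eqVneq c p.2) => [->|hc]; last first.
  by symmetry; apply: fsum_eq0 => n1; apply: fsum_eq0 => m1; rewrite /Ykernel /= (negbTE hc) andbF mul0r.
apply: eq_fsum => n1; rewrite (fsum_single _ 0); first by rewrite /Ykernel /= eqxx subr0.
by move=> m1 h; rewrite /Ykernel (negbTE h) mul0r.
Qed.

Lemma Sser_kapp X y (w : I3 -> C) :
  Sser X (Y1 y w) = kapp (xkernel X) (kapp (Ykernel y) (cst2 w)).
Proof.
rewrite -Y1d_kapp; apply: funext => p; apply: funext => m; apply: funext => n.
rewrite /kapp /Sser; apply: eq_fsum => q.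
rewrite (fsum_single _ 0); last first.
  by move=> n1 h; apply: fsum_eq0 => m1; rewrite /xkernel (negbTE h) mul0r.
rewrite (fsum_single _ m); last first.
  move=> m1 h; rewrite /xkernel eqxx /Y1d fsum_eq0 ?mulr0 // => ab; apply: fsum_eq0 => k.
  by rewrite /cst2 (_ : m - m1 == 0 = false) ?mulr0 // subr_eq0 eq_sym; exact: negbTE.
rewrite /xkernel eqxx subrr subr0; congr (_ * _); apply: eq_fsum => ab.
rewrite (fsum_single _ n); first by rewrite subrr /cst2 eqxx mulrC.
move=> k h; rewrite /cst2 (_ : n - k == 0 = false) ?andbF ?mulr0 //.
by rewrite subr_eq0 eq_sym; exact: negbTE.
Qed.

Lemma lapp_cst_basis X r : lapp X (cst (basis r)) = fun q j => X q r j.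
Proof.
apply: funext => q; apply: funext => j; rewrite /lapp (fsum_single _ r); last first.
  move=> q' h; apply: fsum_eq0 => m; rewrite /cst /basis (negbTE h).
  by case: ifP; rewrite mulr0.
rewrite (fsum_single _ j); first by rewrite /cst subrr eqxx /basis eqxx mulr1.
move=> m h; rewrite /cst (_ : j - m == 0 = false) ?mulr0 //.
by rewrite subr_eq0 eq_sym; exact: negbTE.
Qed.

Lemma mx_inverse_lapp X X' :
  (forall w, fin_supp w -> lapp X (lapp X' (cst w)) = cst w) -> mx_inverse X X'.
Proof.
move=> h p r k; have := h (basis r) (basis_fin_supp r).
rewrite lapp_cst_basis => /(congr1 (fun f => f p k)); rewrite {1}/lapp => ->.
by rewrite /cst /basis; case: (k == 0); case: (p == r); rewrite ?andbF.
Qed.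

Lemma unitary_left X : unitary X ->
  forall w, fin_supp w -> lapp (Sinv X) (lapp X (cst w)) = cst w.
Proof.
move=> U w fw.
rewrite -{2}(SinvK X) lapp_Sinv (lapp_Sinv (Sinv X)) twistK twist_cst U ?twist_cst.
  by congr cst; apply: funext => p; rewrite flipK.
exact: fin_supp_flip.
Qed.

Lemma col_finite_Sinv X : col_finite X -> col_finite (Sinv X).
Proof.
move=> cX q; apply: (sub_finite_set _ (finite_image (@flip I) (cX (flip q)))).
move=> p /= [n h]; exists (flip p); last by rewrite flipK.
by exists n; apply: contra h; rewrite /Sinv /S21 => /eqP ->; rewrite mulr0.
Qed.

Lemma entry_lbounded_Sinv X : entry_lbounded X -> entry_lbounded (Sinv X).
Proof.
move=> lX p q; have [N hN] := lX (flip p) (flip q).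
by exists N => n hn; rewrite /Sinv /S21 hN // mulr0.
Qed.

End Operators.

(* rotate u moves the first tensor factor of u to the last place and
   replaces x1 by -x1; it turns the right-hand identity of the hexagon
   symmetry into the left-hand one for S^-1. *)
Section Rotation.
Context {I : choiceType}.
Local Notation I2 := (I * I)%type.
Local Notation I3 := ((I * I) * I)%type.
Implicit Types (X : I2 -> I2 -> int -> C) (y : I -> I -> int -> I -> C).

Definition rot3 (p : I3) : I3 := ((p.1.2, p.2), p.1.1).
Definition rot3i (p : I3) : I3 := ((p.2, p.1.1), p.1.2).

Lemma rot3K : cancel rot3 rot3i. Proof. by case=> [[a b] c]. Qed.
Lemma rot3iK : cancel rot3i rot3. Proof. by case=> [[a b] c]. Qed.

Lemma fin_supp_bij (w : I3 -> C) (f : I3 -> I3) :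
  bijective f -> fin_supp w -> fin_supp (fun q => w (f q)).
Proof.
case=> g fg gf fw; apply: (sub_finite_set _ (finite_image g fw)) => q /= h.
by exists (f q).
Qed.

Definition rotate (u : series I3) : series I3 :=
  fun q m n => (-1) ^ m * u (rot3i q) m n.

Lemma kapp_rotate (K K' : kernel I3 I3) u :
  (forall p q m n, K' (rot3 p) (rot3 q) m n = (-1) ^ m * K p q m n) ->
  kapp K' (rotate u) = rotate (kapp K u).
Proof.
move=> hK'; apply: funext => p'; apply: funext => m; apply: funext => n.
rewrite /kapp /rotate (reindex_fsum rot3 _ (Bijective rot3K rot3iK)) -fsumMl.
apply: eq_fsum => r; rewrite -fsumMl; apply: eq_fsum => n1; rewrite -fsumMl.
apply: eq_fsum => m1; rewrite -{1}(rot3iK p') hK' rot3K -(sign_mulB m1 m); ring.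
Qed.

Lemma cst2_rotate (w : I3 -> C) : cst2 (fun q => w (rot3i q)) = rotate (cst2 w).
Proof.
apply: funext => q; apply: funext => m; apply: funext => n.
by rewrite /rotate /cst2; case: eqP => [->|_] /=; rewrite ?expr0z ?mul1r ?mulr0.
Qed.

Lemma S23_Sinv_rot3 X p q m n :
  S23_x (Sinv X) (rot3 p) (rot3 q) m n = (-1) ^ m * S13_x X p q m n.
Proof.
case: p => [[a b] c]; case: q => [[a' b'] c'].
by rewrite /S23_x /S13_x /rot3 /Sinv /S21 /flip /=; case: ifP => _; rewrite ?mulr0.
Qed.

Lemma S13_Sinv_rot3 X p q m n :
  S13_xpz (Sinv X) (rot3 p) (rot3 q) m n = (-1) ^ m * S12_xmz X p q m n.
Proof.
case: p => [[a b] c]; case: q => [[a' b'] c'].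
rewrite /S13_xpz /S12_xmz /rot3 /Sinv /S21 /flip /=; case: ifP => _; last by rewrite mulr0.
by rewrite expfzDr ?signN1_neq0 //; ring.
Qed.

Lemma Y1d_rotate y u p m n :
  Y1d y (rotate u) p m n = (-1) ^ m * Y2d y u (flip p) m n.
Proof.
rewrite /Y1d /Y2d /rotate -fsumMl; apply: eq_fsum => ab.
by rewrite -fsumMl; apply: eq_fsum => k; rewrite /rot3i /=; ring.
Qed.

Lemma Sser_rotate X y (w : I3 -> C) p m n :
  Sser (Sinv X) (Y1 y (fun q => w (rot3i q))) p m n
  = (-1) ^ m * Sser X (Y2 y w) (flip p) m n.
Proof.
rewrite /Sser -fsumMl [RHS](reindex_fsum (@flip I) _ flip_bij).
by apply: eq_fsum => q; rewrite /Sinv /S21 -mulrA.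
Qed.

Lemma hexagon_rotate X y (w : I3 -> C) :
  (Sser (Sinv X) (Y1 y (fun q => w (rot3i q))) =
     Y1d y (dapp (S13_xpz (Sinv X)) (dapp (S23_x (Sinv X)) (dcst (fun q => w (rot3i q)))))) <->
  (Sser X (Y2 y w) = Y2d y (dapp (S12_xmz X) (dapp (S13_x X) (dcst w)))).
Proof.
rewrite [dcst _]cst2_rotate [dapp (S23_x _) _](kapp_rotate (S13_x X)); last exact: S23_Sinv_rot3.
rewrite [dapp (S13_xpz _) _](kapp_rotate (S12_xmz X)); last exact: S13_Sinv_rot3.
split => h; apply: funext => p; apply: funext => m; apply: funext => n; last first.
  by rewrite Sser_rotate Y1d_rotate h.
have := congr1 (fun f => f (flip p) m n) h; rewrite /= Sser_rotate Y1d_rotate flipK => e.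
by rewrite -[LHS]mul1r -(sign_mul_self m) -mulrA e mulrA sign_mul_self mul1r.
Qed.

End Rotation.

Section Hexagon.
Context {I : choiceType}.
Local Notation I2 := (I * I)%type.
Local Notation I3 := ((I * I) * I)%type.
Variables (y : I -> I -> int -> I -> C).
Hypotheses (fy : forall a b n, fin_supp (y a b n))
  (ly : forall a b, exists N : int, forall n, n < N -> forall i, y a b n i = 0).

Lemma hexagon_inv (X X' : I2 -> I2 -> int -> C) (A1 A2 B1 B2 : kernel I3 I3) :
  col_finite X -> entry_lbounded X -> col_finite X' -> entry_lbounded X' ->
  mx_inverse X' X ->
  laurent_kernel A1 -> laurent_kernel A2 -> laurent_kernel B1 -> laurent_kernel B2 ->
  kcomp A1 B1 = kid -> kcomp A2 B2 = kid ->
  (forall w, fin_supp w -> Sser X (Y1 y w) = Y1d y (dapp A1 (dapp A2 (dcst w)))) ->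
  forall w, fin_supp w -> Sser X' (Y1 y w) = Y1d y (dapp B2 (dapp B1 (dcst w))).
Proof.
move=> cX lX cX' lX' X'X lA1 lA2 lB1 lB2 iA1 iA2 h w fw.
have [y1 y2 y3] := Ykernel_props _ fy ly.
have [s1 s2 s3] := xkernel_props _ cX lX.
have [t1 _ t3] := xkernel_props _ cX' lX'.
rewrite Sser_kapp Y1d_kapp.
apply: (intertwine_inv _ (xkernel X) _ A1 A2) => //; first exact: kcomp_xkernel.
by move=> w' fw'; rewrite -Sser_kapp -Y1d_kapp; exact: h.
Qed.

Lemma hexagon_sym (X : I2 -> I2 -> int -> C) :
  col_finite X -> entry_lbounded X -> unitary X ->
  (forall w, fin_supp w ->
     Sser X (Y1 y w) = Y1d y (dapp (S23_x X) (dapp (S13_xpz X) (dcst w)))) <->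
  (forall w, fin_supp w ->
     Sser X (Y2 y w) = Y2d y (dapp (S12_xmz X) (dapp (S13_x X) (dcst w)))).
Proof.
move=> cX lX U; pose T := Sinv X.
have cT : col_finite T by exact: col_finite_Sinv.
have lT : entry_lbounded T by exact: entry_lbounded_Sinv.
have XT : mx_inverse X T by apply: mx_inverse_lapp; exact: U.
have TX : mx_inverse T X by apply: mx_inverse_lapp; exact: unitary_left.
have l23X := S23_laurent _ cX lX; have l13X := S13_laurent _ cX lX.
have l23T := S23_laurent _ cT lT; have l13T := S13_laurent _ cT lT.
split => h w fw.
  apply/hexagon_rotate; apply: (hexagon_inv X T (S23_x X) (S13_xpz X)) => //.
  - exact: kcomp_S23_x.
  - exact: kcomp_S13_xpz.
  - by apply: fin_supp_bij fw; exact: (Bijective rot3iK rot3K).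
apply: (hexagon_inv T X (S13_xpz T) (S23_x T)) => //.
- exact: kcomp_S13_xpz.
- exact: kcomp_S23_x.
move=> w' fw'; have fw'' : fin_supp (fun q => w' (rot3 q)).
  by apply: fin_supp_bij fw'; exact: (Bijective rot3K rot3iK).
have := proj2 (hexagon_rotate X y (fun q => w' (rot3 q))) (h _ fw'').
by have -> : (fun q => w' (rot3 (rot3i q))) = w' by apply: funext => q; rewrite rot3iK.
Qed.

End Hexagon.

Theorem lemma3p6 (I : choiceType)
  (y : I -> I -> int -> I -> C) (vac : I -> C)
  (sc : (I * I) -> (I * I) -> int -> C) :
  nonlocal_va y vac -> rqyb_operator sc -> unitary sc ->
  ((forall v, fin_supp v -> lapp sc (cst (ten vac v)) = cst (ten vac v)) <->
   (forall v, fin_supp v -> lapp sc (cst (ten v vac)) = cst (ten v vac)))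
  /\
  ((forall w, fin_supp w -> forall p n,
      DL (Dm y vac) (lapp sc (cst w)) p n - lapp sc (DL (Dm y vac) (cst w)) p n
      = - lapp (lder sc) (cst w) p n) <->
   (forall w, fin_supp w -> forall p n,
      DR (Dm y vac) (lapp (Sinv sc) (cst w)) p n
        - lapp (Sinv sc) (DR (Dm y vac) (cst w)) p n
      = lapp (lder (Sinv sc)) (cst w) p n))
  /\
  ((forall w : (I * I) * I -> C, fin_supp w ->
      Sser sc (Y1 y w) = Y1d y (dapp (S23_x sc) (dapp (S13_xpz sc) (dcst w)))) <->
   (forall w : (I * I) * I -> C, fin_supp w ->
      Sser sc (Y2 y w) = Y2d y (dapp (S12_xmz sc) (dapp (S13_x sc) (dcst w))))).
Proof.
move=> [fy [ly [fvac _]]] [cS [lS _]] U.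
split; first exact: vacuum_fixed_sym.
split; first exact: derivation_commutator_sym.
exact: hexagon_sym.
Qed.
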